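(* Let $S=\{p_1,\dots,p_N\}\subset\mathbb{R}^n$, let $f:S\to\mathbb{R}^m$, and let $x\in\mathbb{R}^n\setminus S$. Suppose there exist $J\subset\{1,\dots,N\}$, a point $f_0$ in the convex hull of $\{f(p_j)\}_{j\in J}$, and $\lambda_0>0$ such that $\|f_0-f(p_j)\|=\lambda_0\|x-p_j\|$ for all $j\in J$ and $\|f_0-f(p_i)\|\le\lambda_0\|x-p_i\|$ for all $i\in\{1,\dots,N\}$. Then $\lambda_0=\lambda(f,S)(x)$ and $f_0=K(f,S)(x)$.
   Context: $\|\cdot\|$ is the Euclidean norm. $\lambda(f,S)(x):=\inf_{y\in\mathbb{R}^m}\sup_{i\in\{1,\dots,N\}}\|y-f(p_i)\|/\|x-p_i\|$. There is a unique $y\in\mathbb{R}^m$ attaining this infimum, and it is denoted $K(f,S)(x)$ (the Kirszbraun value of $f$ restricted to $S$ at $x$). *)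

From HB Require Import structures.
From mathcomp Require Import all_boot all_order all_algebra.
From mathcomp Require Import all_classical all_reals.
Set Implicit Arguments. Unset Strict Implicit. Unset Printing Implicit Defensive.
Import Order.TTheory GRing.Theory Num.Theory.
Local Open Scope ring_scope.
Local Open Scope classical_set_scope.

(* Euclidean norm on R^k (MathComp's default matrix norm is the sup norm). *)
Definition enorm (R : realType) (k : nat) (v : 'rV[R]_k) : R :=
  Num.sqrt (\sum_(i < k) v ord0 i ^+ 2).

(* S = {p_1,...,p_N} given by p : 'I_N -> R^n, f : R^n -> R^m (only its values on S matter). *)
(* sup_i ||y - f(p_i)|| / ||x - p_i||   (all terms are >= 0, so max with bottom 0 is the sup) *)
Definition lam_at (R : realType) (n m N : nat) (p : 'I_N -> 'rV[R]_n)
  (f : 'rV[R]_n -> 'rV[R]_m) (x : 'rV[R]_n) (y : 'rV[R]_m) : R :=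
  \big[Num.max/0]_(i < N) (enorm (y - f (p i)) / enorm (x - p i)).

Definition lambdaK (R : realType) (n m N : nat) (p : 'I_N -> 'rV[R]_n)
  (f : 'rV[R]_n -> 'rV[R]_m) (x : 'rV[R]_n) : R :=
  inf [set r | exists y : 'rV[R]_m, r = lam_at p f x y].

(* K(f,S)(x): the point y attaining the infimum (chosen; unique by the paper). *)
Definition KirszbraunK (R : realType) (n m N : nat) (p : 'I_N -> 'rV[R]_n)
  (f : 'rV[R]_n -> 'rV[R]_m) (x : 'rV[R]_n) : 'rV[R]_m :=
  xget 0 [set y : 'rV[R]_m | lam_at p f x y = lambdaK p f x].

From mathcomp Require Import all_boot all_order all_algebra.
From mathcomp Require Import all_classical all_reals.
From mathcomp Require Import ring.
Import Order.TTheory GRing.Theory Num.Theory.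
Local Open Scope ring_scope.
Set Implicit Arguments. Unset Strict Implicit.

(** Let [w] be the barycentric weights of [f0] on the [f(p_j)], [j] in [J].
For any [y], the Huygens formula
[sum_j w_j |y - f(p_j)|^2 = |y - f0|^2 + sum_j w_j |f0 - f(p_j)|^2]
yields some [j] with [w_j > 0] (hence [j] in [J]) such that
[|y - f(p_j)|^2 >= |f0 - f(p_j)|^2 + |y - f0|^2 = (lambda0 |x - p_j|)^2 + |y - f0|^2].
So every [y] has [lam_at y >= lambda0], strictly if [y <> f0], while
[lam_at f0 = lambda0] by the domination hypothesis: [f0] is the unique minimiser. *)

Section EuclideanNorm.
Variable R : realType.

Definition sqnorm (k : nat) (v : 'rV[R]_k) : R := \sum_(i < k) v ord0 i ^+ 2.

Lemma sqnorm_ge0 k (v : 'rV[R]_k) : 0 <= sqnorm v.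
Proof. by apply: sumr_ge0 => i _; apply: sqr_ge0. Qed.

Lemma sqnorm_gt0 k (v : 'rV[R]_k) : v != 0 -> 0 < sqnorm v.
Proof.
apply: contraNT; rewrite -leNgt => sq_le0; apply/eqP/rowP => i; rewrite mxE.
have sq0 : sqnorm v = 0 by apply/eqP; rewrite eq_le sq_le0 sqnorm_ge0.
apply/eqP; rewrite -sqrf_eq0; apply/eqP.
by apply: (psumr_eq0P _ sq0) => // j _; apply: sqr_ge0.
Qed.

Lemma enorm_gt0 k (v : 'rV[R]_k) : v != 0 -> 0 < enorm v.
Proof. by move=> v_neq0; rewrite sqrtr_gt0 sqnorm_gt0. Qed.

Lemma enorm_ler k (u v : 'rV[R]_k) : (enorm u <= enorm v) = (sqnorm u <= sqnorm v).
Proof. by rewrite ler_sqrt ?sqnorm_ge0. Qed.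

Lemma enorm_ltr k (u v : 'rV[R]_k) :
  0 < sqnorm v -> (enorm u < enorm v) = (sqnorm u < sqnorm v).
Proof. by move=> v_gt0; rewrite ltr_sqrt. Qed.

Lemma sqr_barycenter N (w a : 'I_N -> R) (b : R) :
  \sum_(j < N) w j = 1 ->
  \sum_(j < N) w j * (b - a j) ^+ 2 =
    (b - \sum_(j < N) w j * a j) ^+ 2 +
    \sum_(j < N) w j * (\sum_(l < N) w l * a l - a j) ^+ 2.
Proof.
move=> w1; set c := \sum_(l < N) w l * a l.
transitivity (\sum_(j < N) (w j * (c - a j) ^+ 2
    + (b - c) * ((b - c) * w j + 2 * (c * w j - w j * a j)))).
  by apply: eq_bigr => j _; ring.
rewrite big_split /= -mulr_sumr big_split /= -!mulr_sumr sumrB -mulr_sumr w1 -/c.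
ring.
Qed.

Lemma sqnorm_barycenter k N (w : 'I_N -> R) (F : 'I_N -> 'rV[R]_k) (y : 'rV[R]_k) :
  \sum_(j < N) w j = 1 ->
  \sum_(j < N) w j * sqnorm (y - F j) =
    sqnorm (y - \sum_(j < N) w j *: F j) +
    \sum_(j < N) w j * sqnorm (\sum_(l < N) w l *: F l - F j).
Proof.
move=> w1; rewrite /sqnorm.
under eq_bigr => j _ do rewrite mulr_sumr.
under [X in _ + X]eq_bigr => j _ do rewrite mulr_sumr.
rewrite exchange_big [X in _ + X]exchange_big -big_split /=.
apply: eq_bigr => i _.
have coordE (l : 'I_N) : (\sum_(j < N) w j *: F j - F l) ord0 i =
    \sum_(j < N) w j * F j ord0 i - F l ord0 i.
  by rewrite !mxE summxE; congr (_ - _); apply: eq_bigr => j _; rewrite mxE.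
under eq_bigr => j _ do rewrite !mxE.
under [X in _ + X]eq_bigr => j _ do rewrite coordE.
rewrite !mxE summxE (sqr_barycenter _ _ w1).
by congr ((_ - _) ^+ 2 + _); apply: eq_bigr => j _; rewrite mxE.
Qed.

End EuclideanNorm.

Lemma exists_pos_weight_ge (R : realType) N (w D : 'I_N -> R) :
  (forall j, 0 <= w j) -> \sum_(j < N) w j = 1 ->
  exists j, 0 < w j /\ \sum_(i < N) w i * D i <= D j.
Proof.
move=> w_ge0 w1.
have [j0 /andP[_ wj0_gt0]] : exists j, true && (0 < w j).
  by apply: psumr_neq0P => [j _|]; [exact: w_ge0 | rewrite w1; exact/eqP/oner_neq0].
case: (arg_maxP D (wj0_gt0 : (fun j => 0 < w j) j0)) => j wj_gt0 D_le.
exists j; split=> //.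
rewrite -[D j]mul1r -w1 mulr_suml; apply: ler_sum => i _.
have [wi_gt0|] := ltrP 0 (w i); first by apply: ler_wpM2l; [exact: ltW | exact: D_le].
move=> wi_le0; have -> : w i = 0 by apply/eqP; rewrite eq_le wi_le0 w_ge0.
by rewrite !mul0r.
Qed.

Lemma inf_image_attained (R : realType) (T : Type) (F : T -> R) (t0 : T) :
  (forall t, F t0 <= F t) -> inf [set r | exists t, r = F t] = F t0.
Proof.
move=> F_ge; apply/eqP; rewrite eq_le; apply/andP; split.
  by apply: ge_inf; [exists (F t0) => _ [t ->] | exists t0].
by apply: lb_le_inf => [|_ [t ->]]; [exists (F t0), t0|].
Qed.

Section KirszbraunValue.
Variables (R : realType) (n m N : nat).
Variables (p : 'I_N -> 'rV[R]_n) (f : 'rV[R]_n -> 'rV[R]_m) (x : 'rV[R]_n).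
Variables (J : {set 'I_N}) (w : 'I_N -> R) (f0 : 'rV[R]_m) (lambda0 : R).
Hypothesis x_notin_S : forall i, x != p i.
Hypothesis w_ge0 : forall j, 0 <= w j.
Hypothesis w_supp : forall j, j \notin J -> w j = 0.
Hypothesis w1 : \sum_(j < N) w j = 1.
Hypothesis f0E : f0 = \sum_(j < N) w j *: f (p j).
Hypothesis lambda0_gt0 : 0 < lambda0.
Hypothesis tight_on_J :
  forall j, j \in J -> enorm (f0 - f (p j)) = lambda0 * enorm (x - p j).
Hypothesis dominated : forall i, enorm (f0 - f (p i)) <= lambda0 * enorm (x - p i).

Let dist_x_gt0 i : 0 < enorm (x - p i).
Proof. by apply: enorm_gt0; rewrite subr_eq0. Qed.

Lemma exists_far_index y :
  exists2 j, j \in J &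
    sqnorm (f0 - f (p j)) + sqnorm (y - f0) <= sqnorm (y - f (p j)).
Proof.
pose D j := sqnorm (y - f (p j)) - sqnorm (f0 - f (p j)).
have [j [wj_gt0 D_ge]] := exists_pos_weight_ge D w_ge0 w1.
exists j.
  by apply: contraTT wj_gt0 => /w_supp ->; rewrite ltxx.
move: D_ge; rewrite -lerBrDl /D.
under eq_bigr => i _ do rewrite mulrBr.
by rewrite sumrB sqnorm_barycenter // -f0E addrK.
Qed.

Lemma lambda0_le_ratio y :
  exists2 j, j \in J &
    lambda0 <= enorm (y - f (p j)) / enorm (x - p j) /\
    (y != f0 -> lambda0 < enorm (y - f (p j)) / enorm (x - p j)).
Proof.
have [j jJ far] := exists_far_index y.
exists j => //; rewrite ler_pdivlMr // ltr_pdivlMr // -tight_on_J //.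
split; first by rewrite enorm_ler (le_trans _ far) // lerDl sqnorm_ge0.
move=> y_neq_f0; have sq_gt0 : 0 < sqnorm (y - f0) by rewrite sqnorm_gt0 ?subr_eq0.
rewrite enorm_ltr; first by rewrite (lt_le_trans _ far) // ltrDl.
by apply: lt_le_trans far; apply: ltr_wpDl; rewrite ?sqnorm_ge0.
Qed.

Lemma lam_at_ge y : lambda0 <= lam_at p f x y.
Proof.
have [j _ [le_ratio _]] := lambda0_le_ratio y.
by apply: le_trans le_ratio _; apply: le_bigmax.
Qed.

Lemma lam_at_gt y : y != f0 -> lambda0 < lam_at p f x y.
Proof.
have [j _ [_ lt_ratio]] := lambda0_le_ratio y.
by move=> /lt_ratio lt_r; apply: lt_le_trans lt_r _; apply: le_bigmax.
Qed.

Lemma lam_at_f0 : lam_at p f x f0 = lambda0.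
Proof.
apply/eqP; rewrite eq_le lam_at_ge andbT.
by apply: bigmax_le => [|i _]; [exact: ltW | rewrite ler_pdivrMr // mulrC].
Qed.

Lemma lambdaK_eq : lambdaK p f x = lambda0.
Proof.
by rewrite /lambdaK (inf_image_attained (t0 := f0)) lam_at_f0 // => y; exact: lam_at_ge.
Qed.

Lemma KirszbraunK_eq : KirszbraunK p f x = f0.
Proof.
apply: xget_unique => [|y]; rewrite /= lambdaK_eq; first exact: lam_at_f0.
by apply: contra_eq => /lam_at_gt /gt_eqF ->.
Qed.

End KirszbraunValue.

Theorem mainTheorem6 (R : realType) (n m N : nat) (p : 'I_N -> 'rV[R]_n)
  (f : 'rV[R]_n -> 'rV[R]_m) (x : 'rV[R]_n)
  (J : {set 'I_N}) (f0 : 'rV[R]_m) (lambda0 : R) :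
  (forall i, x != p i) ->
  (exists w : 'I_N -> R,
      (forall j, 0 <= w j) /\ (forall j, j \notin J -> w j = 0) /\
      \sum_(j < N) w j = 1 /\ f0 = \sum_(j < N) w j *: f (p j)) ->
  0 < lambda0 ->
  (forall j, j \in J -> enorm (f0 - f (p j)) = lambda0 * enorm (x - p j)) ->
  (forall i, enorm (f0 - f (p i)) <= lambda0 * enorm (x - p i)) ->
  lambda0 = lambdaK p f x /\ f0 = KirszbraunK p f x.
Proof.
move=> x_notin_S [w [w_ge0 [w_supp [w1 f0E]]]] lambda0_gt0 tight dominated.
have lambdaK_val := lambdaK_eq x_notin_S w_ge0 w_supp w1 f0E lambda0_gt0 tight dominated.
have K_val := KirszbraunK_eq x_notin_S w_ge0 w_supp w1 f0E lambda0_gt0 tight dominated.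
by rewrite lambdaK_val K_val.
Qed.
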